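(* For every $v\geq 8$ there exists a connected symmetric configuration $v_3$ with strong chromatic number exactly 4.
   Context: A symmetric configuration $v_3$ consists of a set of $v$ points and a collection of $v$ blocks, each block being a 3-element subset of the points, such that every point lies in exactly 3 blocks and any two distinct points lie in at most one common block; it is connected if it is not the union of two configurations on disjoint nonempty point sets. A strong colouring is an assignment of colours to points such that the three points of every block receive three distinct colours; the strong chromatic number is the minimum number of colours in a strong colouring (equivalently, the chromatic number of the graph on the points in which two points are adjacent iff they share a block). *)

From mathcomp Require Import all_boot.
Set Implicit Arguments. Unset Strict Implicit. Unset Printing Implicit Defensive.

Definition sym_config_v3 (v : nat) (Bs : {set {set 'I_v}}) : Prop :=
  [/\ #|Bs| = v,
      (forall b, b \in Bs -> #|b| = 3),
      (forall x : 'I_v, #|[set b in Bs | x \in b]| = 3) &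
      (forall x y : 'I_v, x != y -> #|[set b in Bs | (x \in b) && (y \in b)]| <= 1)].

Definition config_connected (v : nat) (Bs : {set {set 'I_v}}) : Prop :=
  ~ exists S : {set 'I_v},
      [/\ S != set0, ~: S != set0 &
          forall b, b \in Bs -> (b \subset S) || (b \subset ~: S)].

Definition strong_colouring (v k : nat) (Bs : {set {set 'I_v}})
    (c : {ffun 'I_v -> 'I_k}) : bool :=
  [forall b in Bs, forall x in b, forall y in b, (c x == c y) ==> (x == y)].

Definition strong_colourable (v : nat) (Bs : {set {set 'I_v}}) (k : nat) : bool :=
  [exists c : {ffun 'I_v -> 'I_k}, strong_colouring Bs c].

Lemma strong_colourable_exists (v : nat) (Bs : {set {set 'I_v}}) :
  exists k, strong_colourable Bs k.
Proof.
exists v; apply/existsP; exists [ffun x => x].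
apply/forallP => b; apply/implyP => _; apply/forallP => x; apply/implyP => _.
apply/forallP => y; apply/implyP => _; apply/implyP; rewrite !ffunE; done.
Qed.

Definition strong_chromatic_number (v : nat) (Bs : {set {set 'I_v}}) : nat :=
  ex_minn (strong_colourable_exists Bs).

From mathcomp Require Import all_boot zify.
Set Implicit Arguments. Unset Strict Implicit. Unset Printing Implicit Defensive.

(* A configuration is described by a function T : nat -> seq nat listing, for
   i < v, the points of the i-th block.  Four decidable conditions on T (every
   block is a triple of distinct points below v, every point lies on at least
   three blocks, two distinct points lie on at most one block, every point x > 0
   shares a block with a smaller point) make the blocks a connected configuration
   v_3; counting the incidences in two ways forces every point onto exactly three
   blocks.  A 4-colouring that is rainbow on every block gives a strong
   4-colouring, and four pairwise collinear points show that 4 colours are needed,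
   because a strong colouring is injective on every clique.

   For v >= 20 the "chain" system serves: the blocks {i-3, i-1, i+4} for
   5 <= i < v-4, closed off by five blocks at the left end and four at the right
   end.  Colouring x by x mod 4 is rainbow and {0,1,2,3} is a clique; all the
   conditions follow by case analysis on the shape of the blocks and linear
   arithmetic.  For 8 <= v < 20 explicit systems (the chain system itself once
   v >= 12) are checked by computation. *)

Lemma uniq_map_inj_in (T1 T2 : eqType) (f : T1 -> T2) (s : seq T1) :
  uniq (map f s) -> {in s &, injective f}.
Proof.
elim: s => //= z s IHs /andP[fz_notin uniq_fs] x y.
rewrite !inE => /predU1P[-> | xs] /predU1P[-> | ys] // fxy.
- by move: fz_notin; rewrite fxy map_f.
- by move: fz_notin; rewrite -fxy map_f.
- exact: IHs.
Qed.

Lemma count_iota_ge (P : pred nat) (n : nat) (l : seq nat) :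
  uniq l -> all (fun i => i < n) l -> all P l -> size l <= count P (iota 0 n).
Proof.
move=> uniq_l /allP l_lt /allP l_P; rewrite -size_filter.
by apply: uniq_leq_size => // i il; rewrite mem_filter l_P // mem_iota l_lt.
Qed.

Lemma count_iota_le1 (P : pred nat) (n : nat) :
  (forall i j, i < n -> j < n -> P i -> P j -> i = j) -> count P (iota 0 n) <= 1.
Proof.
move=> P_uniq; rewrite -size_filter.
have := filter_uniq P (iota_uniq 0 n).
have mem_f j : j \in filter P (iota 0 n) -> (j < n) && P j by rewrite mem_filter mem_iota andbC.
case: (filter P (iota 0 n)) mem_f => [|i [|j s]] //= mem_f.
have /andP[i_lt Pi] := mem_f i (mem_head _ _).
have /andP[j_lt Pj] : (j < n) && P j by apply: mem_f; rewrite !inE eqxx orbT.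
by rewrite inE (P_uniq i j) ?eqxx.
Qed.

Lemma card_ord_count (n : nat) (P : pred nat) :
  #|[set i : 'I_n | P i]| = count P (iota 0 n).
Proof.
rewrite -sum1_card (eq_bigl (fun i : 'I_n => P i)) => [|i]; last by rewrite inE.
by rewrite -(big_mkord P (fun _ => 1)) sum1_count /index_iota subn0.
Qed.

Lemma double_count (I J : finType) (R : I -> J -> bool) :
  \sum_i #|[set j | R i j]| = \sum_j #|[set i | R i j]|.
Proof.
have card_sum (K L : finType) (Q : K -> L -> bool) k : #|[set l | Q k l]| = \sum_l Q k l.
  by rewrite -sum1_card big_mkcond; apply: eq_bigr => l _; rewrite inE; case: (Q k l).
rewrite (eq_bigr _ (fun i _ => card_sum _ _ R i)) exchange_big.
by apply: eq_bigr => j _; rewrite (card_sum _ _ (fun j i => R i j)).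
Qed.

Lemma sum_ge_const_eq (I : finType) (f : I -> nat) (m : nat) :
  (forall i, m <= f i) -> \sum_i f i <= #|I| * m -> forall i, f i = m.
Proof.
move=> f_ge sum_le i.
have [sum_ge sum_eq] := leqif_sum (fun i (_ : true) => leqif_eq (f_ge i)).
by move: sum_eq; rewrite eqn_leq sum_ge sum_nat_const sum_le => /esym/forall_inP/(_ i isT)/eqP.
Qed.

Section StrongChromaticNumber.
Variables (v : nat) (Bs : {set {set 'I_v}}).

Lemma strong_colouring_neq k (c : {ffun 'I_v -> 'I_k}) b x y :
  strong_colouring Bs c -> b \in Bs -> x \in b -> y \in b -> x != y -> c x != c y.
Proof.
move=> /forall_inP/(_ b) c_strong bB xb yb; apply: contra => cxy.
by move: (c_strong bB) => /forall_inP/(_ x xb)/forall_inP/(_ y yb)/implyP; apply.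
Qed.

Definition clique (K : seq 'I_v) : Prop :=
  uniq K /\ {in K &, forall x y, x != y -> exists2 b, b \in Bs & (x \in b) && (y \in b)}.

(* A strong colouring is injective on a clique, so it uses at least as many
   colours as the clique has points. *)
Lemma clique_size_le k (c : {ffun 'I_v -> 'I_k}) K :
  strong_colouring Bs c -> clique K -> size K <= k.
Proof.
move=> c_strong [uniq_K K_lines].
have c_inj : {in K &, injective c}.
  move=> x y xK yK; apply: contra_eq => xy.
  have [b bB /andP[xb yb]] := K_lines x y xK yK xy.
  exact: strong_colouring_neq c_strong bB xb yb xy.
rewrite -(size_map c) -(card_uniqP _) ?(map_inj_in_uniq c_inj) //.
by apply: leq_trans (max_card _) _; rewrite card_ord.
Qed.

Lemma strong_chromatic_numberE k K :
  strong_colourable Bs k -> clique K -> size K = k -> strong_chromatic_number Bs = k.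
Proof.
move=> colourable_k K_clique K_size; rewrite /strong_chromatic_number.
case: ex_minnP => m /existsP[c c_strong] m_min.
by apply/eqP; rewrite eqn_leq m_min // -K_size (clique_size_le c_strong K_clique).
Qed.

End StrongChromaticNumber.

Lemma all_iotaP (n : nat) (P : pred nat) :
  reflect (forall i, i < n -> P i) (all P (iota 0 n)).
Proof.
apply: (iffP allP) => P_lt i; first by move=> i_lt; apply: P_lt; rewrite mem_iota.
by rewrite mem_iota => /P_lt.
Qed.

Lemma has_iotaP (n : nat) (P : pred nat) :
  reflect (exists2 i, i < n & P i) (has P (iota 0 n)).
Proof.
apply: (iffP hasP) => [[i] | [i i_lt Pi]]; last by exists i; rewrite ?mem_iota.
by rewrite mem_iota => /andP[_ i_lt] Pi; exists i.
Qed.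

Section TripleSystem.
Variables (v : nat) (T : nat -> seq nat).

Definition on_line (x y : nat) : bool :=
  has (fun i => (x \in T i) && (y \in T i)) (iota 0 v).

Definition blocks_are_triples : bool :=
  all (fun i => [&& size (T i) == 3, uniq (T i) & all (fun x => x < v) (T i)]) (iota 0 v).

Definition degrees_ge3 : bool :=
  all (fun x => 3 <= count (fun i => x \in T i) (iota 0 v)) (iota 0 v).

Definition pairs_on_one_block : bool :=
  all (fun x => all (fun y =>
    (x == y) || (count (fun i => (x \in T i) && (y \in T i)) (iota 0 v) <= 1))
  (iota 0 v)) (iota 0 v).

Definition spanning : bool :=
  all (fun x => (x == 0) || has (fun i => (x \in T i) && has (fun y => y < x) (T i)) (iota 0 v))
    (iota 0 v).

Definition rainbow (k : nat) (col : nat -> nat) : bool :=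
  all (fun x => col x < k) (iota 0 v) && all (fun i => uniq (map col (T i))) (iota 0 v).

Definition is_clique (K : seq nat) : bool :=
  [&& uniq K, all (fun x => x < v) K & all (fun x => all (fun y => (x < y) ==> on_line x y) K) K].

Lemma on_lineC x y : on_line x y = on_line y x.
Proof. by apply: eq_has => i; rewrite andbC. Qed.

Definition block (i : 'I_v) : {set 'I_v} := [set x : 'I_v | val x \in T i].
Definition blocks : {set {set 'I_v}} := [set block i | i : 'I_v].

Lemma mem_block i x : (x \in block i) = (val x \in T i).
Proof. by rewrite inE. Qed.

Lemma mem_blocks_line (i : 'I_v) (x y : 'I_v) :
  val x \in T i -> val y \in T i -> exists2 b, b \in blocks & (x \in b) && (y \in b).
Proof. by move=> xi yi; exists (block i); rewrite ?imset_f // !mem_block xi yi. Qed.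

Section Configuration.
Hypothesis triples : blocks_are_triples.
Hypothesis lines : pairs_on_one_block.

Lemma block_triple i : i < v -> [/\ size (T i) = 3, uniq (T i) & {in T i, forall x, x < v}].
Proof. by move/all_iotaP: triples => /[apply] /and3P[/eqP ? ? /allP]. Qed.

Lemma card_block i : #|block i| = 3.
Proof.
have [size3 uniq_Ti Ti_lt] := block_triple (ltn_ord i).
have -> : block i = [set x in pmap insub (T i)].
  by apply/setP => x; rewrite !inE mem_pmap_sub.
rewrite cardsE (card_uniqP (pmap_sub_uniq _ uniq_Ti)) size_pmap_sub -size3.
by apply/eqP; rewrite -all_count; apply/allP.
Qed.

Lemma two_points_one_block x y i j : i < v -> j < v -> x != y ->
  x \in T i -> y \in T i -> x \in T j -> y \in T j -> i = j.
Proof.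
move=> i_lt j_lt xy xi yi xj yj; have [_ _ Ti_lt] := block_triple i_lt.
move/all_iotaP: lines => /(_ x (Ti_lt x xi))/all_iotaP/(_ y (Ti_lt y yi)).
rewrite (negbTE xy) /= => count_le1; apply/eqP; apply: contraLR count_le1 => ij.
rewrite -ltnNge; apply: (@count_iota_ge _ v [:: i; j]) => /=.
- by rewrite inE ij.
- by rewrite i_lt j_lt.
- by rewrite xi yi xj yj.
Qed.

(* Distinct indices give distinct blocks, since a block has two distinct
   points; hence there are exactly v blocks. *)
Lemma block_inj : injective block.
Proof.
move=> i j eq_ij; apply: val_inj.
have [size3 uniq_Ti Ti_lt] := block_triple (ltn_ord i).
have in_Tj z : z \in T i -> z \in T j.
  move=> zi; have := mem_block i (Ordinal (Ti_lt z zi)).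
  by rewrite eq_ij !mem_block /= => ->.
set a := nth 0 (T i) 0; set b := nth 0 (T i) 1.
have ai : a \in T i by rewrite mem_nth ?size3.
have bi : b \in T i by rewrite mem_nth ?size3.
have ab : a != b by rewrite nth_uniq ?size3.
exact: (two_points_one_block (ltn_ord i) (ltn_ord j) ab ai bi (in_Tj a ai) (in_Tj b bi)).
Qed.

Hypothesis degrees : degrees_ge3.

(* Every point lies on exactly three blocks: each lies on at least three, and
   double counting shows that the degrees sum to 3 * v. *)
Lemma point_degree (x : 'I_v) : #|[set i : 'I_v | x \in block i]| = 3.
Proof.
have count_deg (z : 'I_v) :
    #|[set i : 'I_v | z \in block i]| = count (fun i => val z \in T i) (iota 0 v).
  by rewrite -card_ord_count; apply: eq_card => i; rewrite !inE.
pose deg (z : 'I_v) := #|[set i : 'I_v | z \in block i]|.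
apply: (@sum_ge_const_eq _ deg) => [z|].
  by rewrite /deg count_deg; move/all_iotaP: degrees => /(_ z (ltn_ord z)).
rewrite /deg (double_count (fun z i => z \in block i)) card_ord.
rewrite (eq_bigr (fun _ => 3)) => [|i _]; last by rewrite cardsE card_block.
by rewrite sum_nat_const card_ord.
Qed.

Lemma blocks_config : sym_config_v3 blocks.
Proof.
split.
- by rewrite card_imset ?card_ord //; apply: block_inj.
- by move=> b /imsetP[i _ ->]; apply: card_block.
- move=> x; rewrite -(point_degree x) -(card_imset _ block_inj).
  apply: eq_card => b; rewrite !inE; apply/andP/idP => [[/imsetP[i _ ->] xb]|/imsetP[i]].
    by rewrite imset_f // in_set.
  by rewrite inE => xb ->; rewrite imset_f.
- move=> x y xy; apply/card_le1_eqP => b1 b2; rewrite !inE.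
  case/andP=> /imsetP[i _ ->] /andP[xi yi] /andP[/imsetP[j _ ->] /andP[xj yj]].
  congr block; apply: val_inj.
  by apply: (two_points_one_block (x := x) (y := y) (ltn_ord j) (ltn_ord i)); rewrite -?mem_block.
Qed.

End Configuration.

(* If every point x > 0 shares a block with a smaller point, then by strong
   induction every point lies on the same side of a split as the point 0. *)
Lemma blocks_connected : spanning -> config_connected blocks.
Proof.
move=> span [S [S_nonempty compl_nonempty S_split]].
have same_side b x y : b \in blocks -> x \in b -> y \in b -> (x \in S) = (y \in S).
  move=> /S_split/orP[] /subsetP sub xb yb; first by rewrite !sub.
  by move: (sub x xb) (sub y yb); rewrite !inE => /negbTE -> /negbTE ->.
have /set0Pn[z zS] := S_nonempty.
pose o := Ordinal (leq_ltn_trans (leq0n z) (ltn_ord z)).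
suff side_o x : (x \in S) = (o \in S).
  by case/set0Pn: compl_nonempty => y; rewrite inE side_o -(side_o z) zS.
have [n] := ubnP (val x); elim: n x => // n IHn x x_lt.
have [x0 | x_pos] := posnP (val x); first by congr (_ \in S); apply: val_inj.
move/all_iotaP: span => /(_ x (ltn_ord x)); rewrite eqn0Ngt x_pos /=.
case/has_iotaP=> i i_lt /andP[xi /hasP[y yi y_lt_x]].
have y_lt : y < v by apply: ltn_trans y_lt_x _.
rewrite (same_side (block (Ordinal i_lt)) x (Ordinal y_lt)) ?imset_f ?mem_block //.
by apply: IHn; apply: leq_trans y_lt_x _.
Qed.

Lemma rainbow_colourable k col : rainbow k.+1 col -> strong_colourable blocks k.+1.
Proof.
case/andP=> /all_iotaP col_lt /all_iotaP col_inj.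
apply/existsP; exists [ffun x : 'I_v => inord (col x)].
apply/forall_inP => _ /imsetP[i _ ->]; apply/forall_inP => x xi; apply/forall_inP => y yi.
apply/implyP; rewrite !ffunE => /eqP/(congr1 val); rewrite /= !inordK ?col_lt // => col_xy.
by apply/eqP/val_inj; apply: (uniq_map_inj_in (col_inj i (ltn_ord i))); rewrite -?mem_block.
Qed.

Lemma is_clique_blocks K :
  is_clique K ->
  clique blocks (pmap insub K : seq 'I_v) /\ size (pmap insub K : seq 'I_v) = size K.
Proof.
case/and3P=> uniq_K /allP K_lt /allP K_lines; split; last first.
  by rewrite size_pmap_sub; apply/eqP; rewrite -all_count; apply/allP.
split; first exact: pmap_sub_uniq.
move=> x y; rewrite !mem_pmap_sub => xK yK xy.
have line_xy : on_line x y.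
  case: (ltngtP (val x) (val y)) => [x_lt_y | y_lt_x | /val_inj x_eq_y].
  - by move/allP: (K_lines x xK) => /(_ y yK); rewrite x_lt_y.
  - by rewrite on_lineC; move/allP: (K_lines y yK) => /(_ x xK); rewrite y_lt_x.
  - by rewrite x_eq_y eqxx in xy.
case/has_iotaP: line_xy => i i_lt /andP[xi yi].
exact: (mem_blocks_line (i := Ordinal i_lt) xi yi).
Qed.

Definition four_chromatic_system (col : nat -> nat) (K : seq nat) : bool :=
  [&& blocks_are_triples, degrees_ge3, pairs_on_one_block, spanning,
      rainbow 4 col, is_clique K & size K == 4].

Theorem four_chromatic_configuration col K :
  four_chromatic_system col K ->
  [/\ sym_config_v3 blocks, config_connected blocks & strong_chromatic_number blocks = 4].
Proof.
case/and5P=> triples degrees lines span /and3P[col4 K_clique /eqP K4].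
have [K'_clique K'_size] := is_clique_blocks K_clique.
split; [exact: blocks_config | exact: blocks_connected |].
by apply: strong_chromatic_numberE (rainbow_colourable col4) K'_clique _; rewrite K'_size.
Qed.

End TripleSystem.

Definition left_blocks : seq (seq nat) :=
  [:: [:: 0; 1; 7]; [:: 0; 2; 3]; [:: 0; 5; 6]; [:: 1; 2; 8]; [:: 1; 3; 4]].

Definition right_blocks (v : nat) : seq (seq nat) :=
  [:: [:: v - 1; v - 2; v - 3]; [:: v - 1; v - 4; v - 7];
      [:: v - 2; v - 4; v - 5]; [:: v - 3; v - 5; v - 6]].

Definition chain_block (v i : nat) : seq nat :=
  if i < 5 then nth [::] left_blocks i
  else if i < v - 4 then [:: i - 3; i - 1; i + 4]
  else nth [::] (right_blocks v) (i - (v - 4)).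

(* The eleven possible shapes of a chain block, each with the constraints on
   its index; case analysis on chain_blockP reduces a statement about
   chain_block v i to linear arithmetic. *)
Variant chain_block_spec (v i : nat) : seq nat -> Prop :=
  | ChainLeft0 of i = 0 : chain_block_spec v i [:: 0; 1; 7]
  | ChainLeft1 of i = 1 : chain_block_spec v i [:: 0; 2; 3]
  | ChainLeft2 of i = 2 : chain_block_spec v i [:: 0; 5; 6]
  | ChainLeft3 of i = 3 : chain_block_spec v i [:: 1; 2; 8]
  | ChainLeft4 of i = 4 : chain_block_spec v i [:: 1; 3; 4]
  | ChainMiddle of 5 <= i & i < v - 4 : chain_block_spec v i [:: i - 3; i - 1; i + 4]
  | ChainRight0 of 5 <= i & i = v - 4 : chain_block_spec v i [:: v - 1; v - 2; v - 3]
  | ChainRight1 of 5 <= i & i = v - 3 : chain_block_spec v i [:: v - 1; v - 4; v - 7]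
  | ChainRight2 of 5 <= i & i = v - 2 : chain_block_spec v i [:: v - 2; v - 4; v - 5]
  | ChainRight3 of 5 <= i & i = v - 1 : chain_block_spec v i [:: v - 3; v - 5; v - 6]
  | ChainOutside of v <= i : chain_block_spec v i [::].

Lemma chain_blockP v i : chain_block_spec v i (chain_block v i).
Proof.
rewrite /chain_block; case: ltnP => [i_lt5 | i_ge5].
  by case: i i_lt5 => [|[|[|[|[|i]]]]] // _; constructor.
case: ltnP => [i_mid | i_right]; first exact: ChainMiddle.
have [v_le | i_lt] := leqP v i.
  by rewrite nth_default /=; [apply: ChainOutside | lia].
have : i - (v - 4) < 4 by lia.
case offset: (i - (v - 4)) => [|[|[|[|k]]]] _ /=;
  [apply: ChainRight0 | apply: ChainRight1 | apply: ChainRight2 | apply: ChainRight3 | ]; lia.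
Qed.

Ltac chain_lia := try (case: chain_blockP => /=); rewrite ?inE; lia.

(* For v >= 20 both ends of the chain are far apart, and the conditions hold
   uniformly in v. *)
Section ChainConfiguration.
Variable v : nat.
Hypothesis v_ge20 : 20 <= v.

Lemma chain_triples : blocks_are_triples v (chain_block v).
Proof. by apply/all_iotaP => i i_lt; chain_lia. Qed.

Lemma chain_rainbow : rainbow v (chain_block v) 4 (modn^~ 4).
Proof. by apply/andP; split; apply/all_iotaP => i i_lt; [rewrite ltn_mod | chain_lia]. Qed.

(* Point x >= 9 shares the block x-4 = {x-7, x-5, x} with the smaller point
   x-7; the first points are handled one by one. *)
Lemma chain_spanning : spanning v (chain_block v).
Proof.
apply/all_iotaP => x x_lt; case: (posnP x) => [-> // | x_pos].
apply/orP; right; apply/has_iotaP; case: (ltnP x 9) => [x_lt9 | x_ge9].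
  case: x x_pos x_lt x_lt9 => [|[|[|[|[|[|[|[|[|x]]]]]]]]] //= x_pos x_lt x_lt9;
   [exists 0 | exists 1 | exists 1 | exists 4 | exists 2 | exists 2 | exists 0 | exists 3];
   chain_lia.
by exists (x - 4); chain_lia.
Qed.

Lemma chain_lines : pairs_on_one_block v (chain_block v).
Proof.
apply/all_iotaP => x _; apply/all_iotaP => y _; case: eqVneq => //= xy.
apply: count_iota_le1 => i j i_lt j_lt /andP[xi yi] /andP[xj yj].
move: xi yi xj yj; case: chain_blockP; case: chain_blockP => /=; rewrite ?inE; lia.
Qed.

(* Three explicit blocks through each point: x-4, x+1, x+3 in the middle,
   fixed ones near both ends. *)
Lemma chain_degrees : degrees_ge3 v (chain_block v).
Proof.
apply/all_iotaP => x x_lt.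
have on3 a b c : [&& a < b, b < c & c < v] -> x \in chain_block v a ->
    x \in chain_block v b -> x \in chain_block v c ->
    3 <= count (fun i => x \in chain_block v i) (iota 0 v).
  move=> abc xa xb xc; apply: (@count_iota_ge _ v [:: a; b; c]) => /=.
  - by rewrite !inE; lia.
  - by lia.
  - by rewrite xa xb xc.
case: (ltnP x 9) => [x_lt9 | x_ge9].
  case: x x_lt x_lt9 on3 => [|[|[|[|[|[|[|[|[|x]]]]]]]]] // x_lt x_lt9 on3;
   [apply: (on3 0 1 2) | apply: (on3 0 3 4) | apply: (on3 1 3 5) | apply: (on3 1 4 6)
   | apply: (on3 4 5 7) | apply: (on3 2 6 8) | apply: (on3 2 7 9) | apply: (on3 0 8 10)
   | apply: (on3 3 9 11)]; chain_lia.
case: (leqP x (v - 8)) => [x_mid | x_right].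
  by apply: (on3 (x - 4) (x + 1) (x + 3)); chain_lia.
have [k k_lt x_eq] : exists2 k, k < 7 & x = v - 7 + k by exists (x - (v - 7)); lia.
case: k k_lt x_eq => [|[|[|[|[|[|[|k]]]]]]] // _ x_eq;
  [apply: (on3 (v - 11) (v - 6) (v - 3)) | apply: (on3 (v - 10) (v - 5) (v - 1))
  | apply: (on3 (v - 9) (v - 2) (v - 1)) | apply: (on3 (v - 8) (v - 3) (v - 2))
  | apply: (on3 (v - 7) (v - 4) (v - 1)) | apply: (on3 (v - 6) (v - 4) (v - 2))
  | apply: (on3 (v - 5) (v - 4) (v - 3))]; chain_lia.
Qed.

(* 0, 1, 2, 3 pairwise share one of the blocks 0, 1, 3, 4. *)
Lemma chain_clique : is_clique v (chain_block v) [:: 0; 1; 2; 3].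
Proof.
have line a x y : a < v -> x \in chain_block v a -> y \in chain_block v a ->
    on_line v (chain_block v) x y.
  by move=> a_lt xa ya; apply/has_iotaP; exists a; rewrite ?xa.
rewrite /is_clique /= (line 0 0 1) ?(line 1 0 2) ?(line 1 0 3) ?(line 3 1 2)
  ?(line 4 1 3) ?(line 1 2 3); chain_lia.
Qed.

Lemma chain_system : four_chromatic_system v (chain_block v) (modn^~ 4) [:: 0; 1; 2; 3].
Proof.
by rewrite /four_chromatic_system chain_triples chain_degrees chain_lines chain_spanning
  chain_rainbow chain_clique.
Qed.

End ChainConfiguration.

(* Systems for 8 <= v < 20: explicit tables for v <= 11, and the chain
   system, which still works but needs computation, for 12 <= v < 20. *)
Definition small_blocks (v : nat) : nat -> seq nat :=
  match v with
  | 8 => nth [::] [:: [:: 0; 4; 7]; [:: 3; 6; 7]; [:: 0; 1; 3]; [:: 1; 2; 7];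
                      [:: 1; 4; 5]; [:: 2; 3; 5]; [:: 2; 4; 6]; [:: 0; 5; 6]]
  | 9 => nth [::] [:: [:: 0; 4; 7]; [:: 3; 4; 5]; [:: 0; 3; 8]; [:: 0; 1; 6]; [:: 2; 3; 6];
                      [:: 2; 5; 8]; [:: 1; 7; 8]; [:: 1; 2; 4]; [:: 5; 6; 7]]
  | 10 => nth [::] [:: [:: 1; 4; 5]; [:: 0; 2; 6]; [:: 5; 7; 8]; [:: 0; 4; 7]; [:: 2; 4; 9];
                       [:: 0; 1; 8]; [:: 3; 8; 9]; [:: 6; 7; 9]; [:: 2; 3; 5]; [:: 1; 3; 6]]
  | 11 => nth [::] [:: [:: 3; 6; 9]; [:: 3; 8; 10]; [:: 0; 8; 9]; [:: 1; 5; 6]; [:: 1; 4; 10];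
                       [:: 0; 2; 3]; [:: 2; 5; 8]; [:: 0; 1; 7]; [:: 4; 5; 7]; [:: 7; 9; 10];
                       [:: 2; 4; 6]]
  | _ => chain_block v
  end.

Definition small_colour (v : nat) : nat -> nat :=
  match v with
  | 8 => nth 0 [:: 0; 1; 0; 2; 2; 3; 1; 3]
  | 9 => nth 0 [:: 0; 1; 0; 2; 3; 1; 3; 2; 3]
  | 10 => nth 0 [:: 0; 1; 1; 0; 2; 3; 2; 1; 2; 3]
  | 11 => nth 0 [:: 0; 1; 1; 2; 2; 0; 3; 3; 3; 1; 0]
  | _ => modn^~ 4
  end.

Definition small_clique (v : nat) : seq nat :=
  match v with
  | 8 => [:: 0; 1; 3; 5]
  | 9 => [:: 0; 1; 4; 7]
  | 10 => [:: 1; 3; 5; 8]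
  | 11 => [:: 0; 2; 3; 8]
  | _ => [:: 0; 1; 2; 3]
  end.

Lemma small_systems :
  all (fun v => four_chromatic_system v (small_blocks v) (small_colour v) (small_clique v))
    (iota 8 12).
Proof. by vm_compute. Qed.

Theorem mainTheorem14 (v : nat) : 8 <= v ->
  exists Bs : {set {set 'I_v}},
    [/\ sym_config_v3 Bs, config_connected Bs & strong_chromatic_number Bs = 4].
Proof.
move=> v_ge8; have system : exists T col K, four_chromatic_system v T col K.
  have [v_lt20 | v_ge20] := ltnP v 20.
    exists (small_blocks v), (small_colour v), (small_clique v).
    by apply: (allP small_systems); rewrite mem_iota v_ge8.
  by exists (chain_block v), (modn^~ 4), [:: 0; 1; 2; 3]; apply: chain_system.
case: system => T [col [K /four_chromatic_configuration config]].
by exists (blocks v T).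
Qed.
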